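(* Setting: integers $N,Q,S\ge1$, $1\le M\le N$, $J\ge1$; $\mathbf{H}\in\mathbb{R}^{Q\times N}\setminus\{\mathbf{0}\}$, $\mathbf{y}\in\mathbb{R}^Q$, a real matrix $\mathbf{V}_0$ with $N$ columns, and for $s\in\{1,\dots,S\}$: $P_s\ge1$, $\mathbf{V}_s\in\mathbb{R}^{P_s\times N}$, $\mathbf{c}_s\in\mathbb{R}^{P_s}$; $\Phi:\mathbb{R}^Q\to\mathbb{R}$; functions $\psi_{s,\delta}:\mathbb{R}\to\mathbb{R}$ for $\delta>0$; $F_\delta(\mathbf{x})=\Phi(\mathbf{H}\mathbf{x}-\mathbf{y})+\sum_{s=1}^S\psi_{s,\delta}(\|\mathbf{V}_s\mathbf{x}-\mathbf{c}_s\|)+\|\mathbf{V}_0\mathbf{x}\|^2$. Assume: (A1i) $\Phi$ is continuous and coercive; (A1ii) for every $\delta>0$ and $s$, $\psi_{s,\delta}$ is continuous and nonnegative; (A1iii) $\operatorname{Ker}\mathbf{H}\cap\operatorname{Ker}\mathbf{V}_0=\{\mathbf{0}\}$. Fix $\delta>0$ and assume: (A3i) $\Phi$ is differentiable with $L$-Lipschitz gradient; (A3ii) each $\psi_{s,\delta}$ is differentiable; (A3iii) each $t\mapsto\psi_{s,\delta}(\sqrt t)$ is concave on $[0,+\infty)$; (A3iv) for each $s$ there is $\overline\omega_s\in[0,+\infty)$ with $0\le\dot\psi_{s,\delta}(t)\le\overline\omega_s t$ for all $t>0$, and $\lim_{t\to0}\dot\psi_{s,\delta}(t)/t\in\mathbb{R}$.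 Let $\omega_{s,\delta}(t)=\dot\psi_{s,\delta}(t)/t$, extended by continuity at $0$, fix $\mu\in[L,+\infty)$ and set $\mathbf{A}(\mathbf{x})=\mu\mathbf{H}^\top\mathbf{H}+2\mathbf{V}_0^\top\mathbf{V}_0+\mathbf{V}^\top\operatorname{Diag}\{\mathbf{b}(\mathbf{x})\}\mathbf{V}$, where $\mathbf{V}=[\mathbf{V}_1^\top|\cdots|\mathbf{V}_S^\top]^\top$ and $b_{P_1+\dots+P_{s-1}+p}(\mathbf{x})=\omega_{s,\delta}(\|\mathbf{V}_s\mathbf{x}-\mathbf{c}_s\|)$ for $p\in\{1,\dots,P_s\}$. Consider the iteration: $\mathbf{x}_0\in\mathbb{R}^N$; for each $k\in\mathbb{N}$, given any matrix $\mathbf{D}_k\in\mathbb{R}^{N\times M}$, set $\mathbf{u}_k^0=\mathbf{0}$ and for $j=1,\dots,J$: $\mathbf{B}_k^{j-1}=\mathbf{D}_k^\top\mathbf{A}(\mathbf{x}_k+\mathbf{D}_k\mathbf{u}_k^{j-1})\mathbf{D}_k$, $\mathbf{u}_k^j=\mathbf{u}_k^{j-1}-(\mathbf{B}_k^{j-1})^{\dagger}\mathbf{D}_k^\top\nabla F_\delta(\mathbf{x}_k+\mathbf{D}_k\mathbf{u}_k^{j-1})$ (pseudo-inverse $\dagger$); then $\mathbf{x}_{k+1}=\mathbf{x}_k+\mathbf{D}_k\mathbf{u}_k^J$. Write $\mathbf{x}_k^j=\mathbf{x}_k+\mathbf{D}_k\mathbf{u}_k^j$ and $\mathbf{g}_k^j=\nabla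 F_\delta(\mathbf{x}_k^j)$. Claim: for every $k\in\mathbb{N}$ and $j\in\{0,\dots,J-1\}$, $$\eta\|\mathbf{x}_k^{j+1}-\mathbf{x}_k^j\|\le\|\mathbf{g}_k^j\|,$$ where $\eta>0$ is the smallest eigenvalue of $\mu\mathbf{H}^\top\mathbf{H}+2\mathbf{V}_0^\top\mathbf{V}_0$.
   Context: $\|\cdot\|$ is the Euclidean norm; $\dot\psi_{s,\delta}$ is the derivative of $\psi_{s,\delta}$. *)

From HB Require Import structures.
From mathcomp Require Import all_boot all_order all_algebra.
From mathcomp Require Import all_classical all_reals all_analysis.
Set Implicit Arguments. Unset Strict Implicit. Unset Printing Implicit Defensive.
Import Order.TTheory GRing.Theory Num.Theory.
Import numFieldNormedType.Exports.
Local Open Scope classical_set_scope.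
Local Open Scope ring_scope.

Definition norm2 (R : realType) (n : nat) (v : 'cV[R]_n) : R :=
  Num.sqrt (\sum_(i < n) v i 0 ^+ 2).

Definition grad (R : realType) (n : nat) (f : 'cV[R]_n -> R) (x : 'cV[R]_n)
  : 'cV[R]_n := \col_(i < n) ('D_(delta_mx i 0) f x).

Definition coercive (R : realType) (n : nat) (f : 'cV[R]_n -> R) : Prop :=
  forall A : R, exists r : R, forall z, r <= norm2 z -> A <= f z.

Definition penrose (R : realType) (m n : nat) (A : 'M[R]_(m, n))
  (X : 'M[R]_(n, m)) : Prop :=
  [/\ A *m X *m A = A, X *m A *m X = X,
      (A *m X)^T = A *m X & (X *m A)^T = X *m A].

Definition mp_pinv (R : realType) (m n : nat) (A : 'M[R]_(m, n))
  : 'M[R]_(n, m) := xget 0 [set X | penrose A X].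

Definition Fdelta (R : realType) (N Q S R0 : nat) (P : 'I_S -> nat)
  (Phi : 'cV[R]_Q -> R) (psi : 'I_S -> R -> R -> R)
  (H : 'M[R]_(Q, N)) (y : 'cV[R]_Q) (V0 : 'M[R]_(R0, N))
  (V : forall s : 'I_S, 'M[R]_(P s, N)) (c : forall s : 'I_S, 'cV[R]_(P s))
  (delta : R) (x : 'cV[R]_N) : R :=
  Phi (H *m x - y) + \sum_(s < S) psi s delta (norm2 (V s *m x - c s))
  + norm2 (V0 *m x) ^+ 2.

Definition omega (R : realType) (f : R -> R) (t : R) : R :=
  if t == 0 then lim ((fun u => derive1 f u / u) @ 0^'+) else derive1 f t / t.

Definition Amaj (R : realType) (N Q S R0 : nat) (P : 'I_S -> nat)
  (psi : 'I_S -> R -> R -> R)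
  (H : 'M[R]_(Q, N)) (V0 : 'M[R]_(R0, N))
  (V : forall s : 'I_S, 'M[R]_(P s, N)) (c : forall s : 'I_S, 'cV[R]_(P s))
  (delta mu : R) (x : 'cV[R]_N) : 'M[R]_N :=
  let Vst : 'M[R]_(\sum_(s < S) P s, N) := \mxcol_(s < S) V s in
  mu *: (H^T *m H) + 2%:R *: (V0^T *m V0)
  + Vst^T *m (\mxdiag_(s < S) (omega (psi s delta) (norm2 (V s *m x - c s)))%:M)
      *m Vst.

From HB Require Import structures.
From mathcomp Require Import all_boot all_order all_algebra.
From mathcomp Require Import all_classical all_reals all_analysis.
From mathcomp Require Import ring lra.
Import Order.TTheory GRing.Theory Num.Theory.
Import numFieldNormedType.Exports.
Local Open Scope classical_set_scope.
Local Open Scope ring_scope.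
Set Implicit Arguments. Unset Strict Implicit. Unset Printing Implicit Defensive.

(* The inner step is v = D B^+ D^T g with B = D^T A D and A symmetric, so the
   Penrose identity B^+ B B^+ = B^+ gives v^T A v = g^T v.  Since A dominates
   A0 = mu H^T H + 2 V0^T V0 (the weights omega are nonnegative) and
   v^T A0 v >= eta |v|^2 (Rayleigh), we get eta |v|^2 <= g^T v, and expanding
   |g - eta v|^2 >= 0 yields eta^2 |v|^2 <= |g|^2. *)

Section QuadraticForms.
Variable R : realType.

Definition mxform n (M : 'M[R]_n) (a b : 'cV[R]_n) : R := (a^T *m M *m b) 0 0.

Definition sqnorm n (a : 'cV[R]_n) : R := \sum_i a i 0 ^+ 2.

Definition entry_abs_sum n (M : 'M[R]_n) : R := \sum_j \sum_i `|M i j|.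

Lemma norm2E n (a : 'cV[R]_n) : norm2 a = Num.sqrt (sqnorm a).
Proof. by []. Qed.

Lemma mxform1 n (a : 'cV[R]_n) : mxform 1%:M a a = sqnorm a.
Proof. by rewrite /mxform mulmx1 mxE; apply: eq_bigr => i _; rewrite mxE expr2. Qed.

Lemma sqnorm_ge0 n (a : 'cV[R]_n) : 0 <= sqnorm a.
Proof. by rewrite sumr_ge0 // => i _; rewrite sqr_ge0. Qed.

Lemma sqnormN n (a : 'cV[R]_n) : sqnorm (- a) = sqnorm a.
Proof. by apply: eq_bigr => i _; rewrite mxE sqrrN. Qed.

Lemma sqr_coord_le_sqnorm n (a : 'cV[R]_n) i : a i 0 ^+ 2 <= sqnorm a.
Proof. by rewrite /sqnorm (bigD1 i) //= lerDl sumr_ge0 // => k _; rewrite sqr_ge0. Qed.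

Lemma sqnorm_gt0 n (a : 'cV[R]_n) : a != 0 -> 0 < sqnorm a.
Proof.
move=> a0; rewrite lt_neqAle sqnorm_ge0 andbT eq_sym; apply: contra a0 => /eqP a_0.
apply/eqP/matrixP => i j; rewrite (ord1 j) mxE; apply/eqP.
by rewrite -sqrf_eq0 eq_le sqr_ge0 andbT -a_0 sqr_coord_le_sqnorm.
Qed.

Lemma entry_abs_sum_ge0 n (M : 'M[R]_n) : 0 <= entry_abs_sum M.
Proof. by rewrite sumr_ge0 // => j _; rewrite sumr_ge0. Qed.

Lemma mxform0 n (M : 'M[R]_n) : mxform M 0 0 = 0.
Proof. by rewrite /mxform trmx0 mul0mx mulmx0 mxE. Qed.

Lemma mxform_trmx n (M : 'M[R]_n) a b : mxform M b a = mxform M^T a b.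
Proof.
have -> : mxform M b a = ((b^T *m M *m a)^T) 0 0 by rewrite mxE.
by rewrite /mxform !trmx_mul trmxK mulmxA.
Qed.

Lemma mxformDl n (M1 M2 : 'M[R]_n) a b :
  mxform (M1 + M2) a b = mxform M1 a b + mxform M2 a b.
Proof. by rewrite /mxform mulmxDr mulmxDl mxE. Qed.

Lemma mxformZl n c (M : 'M[R]_n) a b : mxform (c *: M) a b = c * mxform M a b.
Proof. by rewrite /mxform -scalemxAr -scalemxAl mxE. Qed.

Lemma mxform_suml n (I : finType) (F : I -> 'M[R]_n) a b :
  mxform (\sum_i F i) a b = \sum_i mxform (F i) a b.
Proof. by rewrite /mxform mulmx_sumr mulmx_suml summxE. Qed.

Lemma mxform_mulTmx m n (W : 'M[R]_(m, n)) a : mxform (W^T *m W) a a = sqnorm (W *m a).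
Proof. by rewrite -mxform1 /mxform trmx_mul !mulmx1 !mulmxA. Qed.

Lemma mxform_subZ n (M : 'M[R]_n) a b t :
  mxform M (a - t *: b) (a - t *: b) =
  mxform M a a - t * mxform M a b - t * mxform M b a + t ^+ 2 * mxform M b b.
Proof.
rewrite /mxform (_ : (a - t *: b)^T = a^T - t *: b^T); last by rewrite linearB linearZ.
rewrite !mulmxDl !mulmxDr !mulNmx !mulmxN.
by rewrite -!scalemxAl -!scalemxAr !(mxE, scalerN) /=; ring.
Qed.

Lemma norm_mxform_le n (M : 'M[R]_n) a :
  `|mxform M a a| <= entry_abs_sum M * sqnorm a.
Proof.
have -> : mxform M a a = \sum_j \sum_i a i 0 * M i j * a j 0.
  rewrite /mxform mxE; apply: eq_bigr => j _; rewrite mxE mulr_suml.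
  by apply: eq_bigr => i _; rewrite mxE.
rewrite mulr_suml; apply: (le_trans (ler_norm_sum _ _ _)); apply: ler_sum => j _.
rewrite mulr_suml; apply: (le_trans (ler_norm_sum _ _ _)); apply: ler_sum => i _.
rewrite !normrM mulrAC mulrC ler_wpM2l //.
have hi := sqr_coord_le_sqnorm a i; have hj := sqr_coord_le_sqnorm a j.
rewrite -[a i 0 ^+ 2]real_normK ?num_real // in hi.
rewrite -[a j 0 ^+ 2]real_normK ?num_real // in hj.
have := normr_ge0 (a i 0); have := normr_ge0 (a j 0); nra.
Qed.

(* An invertible positive semidefinite form is coercive: expand
   (w - t C^-1 w)^T C (w - t C^-1 w) >= 0 with t small. *)
Lemma psd_unitmx_coercive n (C : 'M[R]_n) :
  C^T = C -> C \in unitmx -> (forall w, 0 <= mxform C w w) ->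
  exists2 t, 0 < t & forall w, t * sqnorm w <= mxform C w w.
Proof.
move=> Csym Cu Cpsd; set Ci := invmx C; set k := entry_abs_sum Ci^T.
have k0 : 0 <= k := entry_abs_sum_ge0 _.
exists (k + 1)^-1; first by rewrite invr_gt0; lra.
move=> w; set t := (k + 1)^-1; set w' := Ci *m w.
have tk : t * (k + 1) = 1 by rewrite mulVf //; apply/lt0r_neq0; lra.
have Cw' : C *m w' = w by rewrite /w' mulKVmx.
have e1 : mxform C w w' = sqnorm w by rewrite -mxform1 /mxform -mulmxA Cw' mulmx1.
have e2 : mxform C w' w = sqnorm w by rewrite mxform_trmx Csym e1.
have e3 : mxform C w' w' = mxform Ci^T w w by rewrite /mxform -mulmxA Cw' trmx_mul.
have := Cpsd (w - t *: w'); rewrite mxform_subZ e1 e2 e3.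
have := norm_mxform_le Ci^T w; rewrite ler_norml => /andP[_].
have := sqnorm_ge0 w; have t0 : 0 < t by rewrite invr_gt0; lra.
set q := mxform Ci^T w w; set s := sqnorm w => s0 qle.
have : t ^+ 2 * q <= t ^+ 2 * (k * s) by rewrite ler_wpM2l // sqr_ge0.
have : t * s = t * (t * (k + 1)) * s by rewrite tk mulr1.
have : 0 <= t ^+ 2 * s by rewrite mulr_ge0 // sqr_ge0.
nra.
Qed.

Definition rayleigh_min n (M : 'M[R]_n) : R :=
  inf [set mxform M w w / sqnorm w | w in [set w | w != 0]].

Lemma rayleigh_min_le n (M : 'M[R]_n) w :
  rayleigh_min M * sqnorm w <= mxform M w w.
Proof.
have [->|w0] := eqVneq w 0; first by rewrite mxform0 -mxform1 mxform0 mulr0.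
have sp := sqnorm_gt0 w0; rewrite -ler_pdivlMr //; apply: ge_inf; last by exists w.
exists (- entry_abs_sum M) => _ [z /= z0 <-].
rewrite ler_pdivlMr ?sqnorm_gt0 // mulNr.
by have := norm_mxform_le M z; rewrite ler_norml => /andP[].
Qed.

Lemma eigenvalue_rayleigh_min n (M : 'M[R]_n) :
  M^T = M -> (exists z : 'cV[R]_n, z != 0) -> eigenvalue M (rayleigh_min M).
Proof.
move=> Msym [z z0]; set m := rayleigh_min M.
rewrite /eigenvalue /eigenspace kermx_eq0 row_free_unit; apply/negP => Cu.
have Cform w : mxform (M - m%:M) w w = mxform M w w - m * sqnorm w.
  by rewrite -scalemx1 mxformDl -scaleNr mxformZl mxform1 mulNr.
have Csym : (M - m%:M)^T = M - m%:M by rewrite linearB /= tr_scalar_mx Msym.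
have [t t0 tle] : exists2 t, 0 < t & forall w, t * sqnorm w <= mxform (M - m%:M) w w.
  by apply: psd_unitmx_coercive => // w; rewrite Cform subr_ge0 rayleigh_min_le.
suff : m + t <= m by lra.
apply: lb_le_inf; first by exists (mxform M z z / sqnorm z), z.
move=> _ [w /= w0 <-]; rewrite ler_pdivlMr ?sqnorm_gt0 // mulrDl.
by have := tle w; rewrite Cform; lra.
Qed.

Lemma min_eigenvalue_le_mxform n (M : 'M[R]_n) eta :
  M^T = M -> (forall a, eigenvalue M a -> eta <= a) ->
  forall z, eta * sqnorm z <= mxform M z z.
Proof.
move=> Msym etamin z; have [->|z0] := eqVneq z 0.
  by rewrite mxform0 -mxform1 mxform0 mulr0.
apply: le_trans (rayleigh_min_le M z); rewrite ler_wpM2r ?sqnorm_ge0 //.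
by apply/etamin/eigenvalue_rayleigh_min => //; exists z.
Qed.

Lemma norm2_le_of_mxform1_ge n eta (g v : 'cV[R]_n) :
  eta * sqnorm v <= mxform 1%:M g v -> eta * norm2 v <= norm2 g.
Proof.
move=> le_gv; rewrite !norm2E.
have [eta0|etap] := leP eta 0.
  by apply: le_trans (sqrtr_ge0 _); rewrite mulr_le0_ge0 // sqrtr_ge0.
have hq := sqnorm_ge0 (g - eta *: v).
rewrite -mxform1 mxform_subZ (mxform_trmx _ g v) trmx1 !mxform1 in hq.
rewrite -[eta]gtr0_norm // -sqrtr_sqr -sqrtrM ?sqr_ge0 // ler_sqrt ?sqnorm_ge0 //.
have := ler_wpM2l (ltW etap) le_gv; rewrite mulrA -expr2; lra.
Qed.

End QuadraticForms.

Lemma penrose_uniq (R : realType) m n (A : 'M[R]_(m, n)) X Y :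
  penrose A X -> penrose A Y -> X = Y.
Proof.
case=> [X1 X2 X3 X4] [Y1 Y2 Y3 Y4].
have eX : X = X *m A *m Y.
  have AT : A^T = A^T *m Y^T *m A^T by rewrite -!trmx_mul mulmxA Y1.
  have XAX : X *m (X^T *m A^T) = X by rewrite -trmx_mul X3 mulmxA X2.
  have XA : X^T *m A^T = X^T *m A^T *m (Y^T *m A^T) by rewrite {1}AT !mulmxA.
  by rewrite -{1}XAX XA -[X^T *m A^T]trmx_mul -[Y^T *m A^T]trmx_mul X3 Y3 !mulmxA X2.
have eY : Y = X *m A *m Y.
  have AT : A^T = A^T *m X^T *m A^T by rewrite -!trmx_mul mulmxA X1.
  have YAY : A^T *m Y^T *m Y = Y by rewrite -trmx_mul Y4 Y2.
  have AY : A^T *m Y^T = A^T *m X^T *m (A^T *m Y^T) by rewrite {1}AT !mulmxA.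
  rewrite -{1}YAY AY -[A^T *m X^T]trmx_mul -[A^T *m Y^T]trmx_mul X4 Y4.
  by rewrite -mulmxA Y2.
by rewrite {1}eX -eY.
Qed.

Lemma trmx_penrose (R : realType) n (A : 'M[R]_n) X :
  A^T = A -> penrose A X -> penrose A X^T.
Proof.
move=> sA [X1 X2 X3 X4]; split.
- by have := congr1 trmx X1; rewrite !trmx_mul sA mulmxA.
- by have := congr1 trmx X2; rewrite !trmx_mul sA mulmxA.
- by rewrite trmx_mul trmxK sA -X4 trmx_mul sA.
- by rewrite trmx_mul trmxK sA -X3 trmx_mul sA.
Qed.

Lemma mp_pinv_sym (R : realType) n (A : 'M[R]_n) :
  A^T = A -> (mp_pinv A)^T = mp_pinv A.
Proof.
move=> sA; have [[X pX]|nX] := pselect (exists X, penrose A X); last first.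
  by rewrite /mp_pinv xgetPN ?trmx0 // => X pX; apply: nX; exists X.
have pP : penrose A (mp_pinv A) by apply: xgetPex; exists X.
exact: penrose_uniq (trmx_penrose sA pP) pP.
Qed.

(* When no Penrose solution exists, [mp_pinv] is the junk value 0 and both
   sides vanish. *)
Lemma mxform_pinv_step (R : realType) n m (A : 'M[R]_n) (D : 'M[R]_(n, m)) g :
  A^T = A ->
  let v := D *m (mp_pinv (D^T *m A *m D) *m (D^T *m g)) in
  mxform A v v = mxform 1%:M g v.
Proof.
move=> sA v; set B := D^T *m A *m D; set X := mp_pinv B.
have sB : B^T = B by rewrite /B !trmx_mul trmxK sA mulmxA.
have [[X0 pX0]|nX] := pselect (exists X, penrose B X); last first.
  have X0 : X = 0 by rewrite /X /mp_pinv xgetPN // => Y pY; apply: nX; exists Y.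
  by rewrite /v -/X X0 !mul0mx mulmx0 /mxform !mulmx0 mxE.
have [_ XBX _ _] : penrose B X by apply: xgetPex; exists X0.
rewrite /mxform mulmx1 /v -/B -/X !trmx_mul trmxK mp_pinv_sym // -/X.
congr (_ 0 0); rewrite -!mulmxA; congr (_ *m (_ *m _)).
rewrite !mulmxA (_ : X *m D^T *m A *m D = X *m B) ?XBX //.
by rewrite /B !mulmxA.
Qed.

Lemma omega_ge0 (R : realType) (f : R -> R) t : 0 <= t ->
  (forall t, 0 < t -> 0 <= derive1 f t) ->
  (exists l : R, (fun u => derive1 f u / u) @ (0:R)^'+ --> l) -> 0 <= omega f t.
Proof.
move=> t0 hd [l hl]; rewrite /omega; case: ifPn => [_|tn0].
  apply: limr_ge; first exact: cvgP hl.
  near=> w; have w0 : 0 < w by near: w; exact: nbhs_right_gt.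
  by rewrite divr_ge0 // ?hd // ltW.
by rewrite divr_ge0 // hd // lt_neqAle eq_sym tn0.
Unshelve. all: by end_near.
Qed.

Section Majorant.
Variables (R : realType) (N Q S R0 : nat) (P : 'I_S -> nat).
Variables (psi : 'I_S -> R -> R -> R) (H : 'M[R]_(Q, N)) (V0 : 'M[R]_(R0, N)).
Variables (V : forall s : 'I_S, 'M[R]_(P s, N)) (c : forall s : 'I_S, 'cV[R]_(P s)).
Variables (delta mu : R).

Let A0 := mu *: (H^T *m H) + 2%:R *: (V0^T *m V0).

Lemma Amaj_sum x : Amaj psi H V0 V c delta mu x =
  A0 + \sum_s omega (psi s delta) (norm2 (V s *m x - c s)) *: ((V s)^T *m V s).
Proof.
rewrite /Amaj tr_mxcol -mulmxA mul_mxdiag_mxcol mul_mxrow_mxcol.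
by congr (_ + _); apply: eq_bigr => s _; rewrite mul_scalar_mx -scalemxAr.
Qed.

Lemma trmx_A0 : A0^T = A0.
Proof. by rewrite !linearD /= !linearZ /= !trmx_mul !trmxK. Qed.

Lemma trmx_Amaj x : (Amaj psi H V0 V c delta mu x)^T = Amaj psi H V0 V c delta mu x.
Proof.
rewrite Amaj_sum linearD /= trmx_A0 linear_sum; congr (_ + _).
by apply: eq_bigr => s _; rewrite linearZ /= trmx_mul trmxK.
Qed.

Lemma mxform_A0_le_Amaj x v :
  (forall s t, 0 <= t -> 0 <= omega (psi s delta) t) ->
  mxform A0 v v <= mxform (Amaj psi H V0 V c delta mu x) v v.
Proof.
move=> omega0; rewrite Amaj_sum [leRHS]mxformDl lerDl mxform_suml sumr_ge0 // => s _.
by rewrite mxformZl mxform_mulTmx mulr_ge0 ?sqnorm_ge0 ?omega0 ?sqrtr_ge0.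
Qed.

End Majorant.

Theorem lemma4 (R : realType) (N Q S M J R0 : nat) (P : 'I_S -> nat)
  (H : 'M[R]_(Q, N)) (y : 'cV[R]_Q) (V0 : 'M[R]_(R0, N))
  (V : forall s : 'I_S, 'M[R]_(P s, N)) (c : forall s : 'I_S, 'cV[R]_(P s))
  (Phi : 'cV[R]_Q -> R) (psi : 'I_S -> R -> R -> R)
  (delta L mu eta : R)
  (D : nat -> 'M[R]_(N, M)) (x : nat -> 'cV[R]_N)
  (u : nat -> nat -> 'cV[R]_M) :
  (0 < N)%N -> (0 < Q)%N -> (0 < S)%N -> (0 < M)%N -> (M <= N)%N ->
  (0 < J)%N -> (forall s, (0 < P s)%N) ->
  H != 0 ->
  (* (A1i) *)
  continuous Phi -> coercive Phi ->
  (* (A1ii) *)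
  (forall d, 0 < d -> forall s, continuous (psi s d) /\ forall t, 0 <= psi s d t) ->
  (* (A1iii) *)
  (forall z : 'cV[R]_N, H *m z = 0 -> V0 *m z = 0 -> z = 0) ->
  0 < delta ->
  (* (A3i) *)
  (forall z, differentiable Phi z) ->
  (forall z1 z2, norm2 (grad Phi z1 - grad Phi z2) <= L * norm2 (z1 - z2)) ->
  (* (A3ii) *)
  (forall s t, derivable (psi s delta) t 1) ->
  (* (A3iii) *)
  (forall s a b l, 0 <= a -> 0 <= b -> 0 <= l <= 1 ->
     l * psi s delta (Num.sqrt a) + (1 - l) * psi s delta (Num.sqrt b)
     <= psi s delta (Num.sqrt (l * a + (1 - l) * b))) ->
  (* (A3iv) *)
  (forall s, exists2 wbar, 0 <= wbar &
     forall t, 0 < t -> 0 <= derive1 (psi s delta) t <= wbar * t) ->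
  (forall s, exists l : R,
     (fun t => derive1 (psi s delta) t / t) @ 0^'+ --> l) ->
  L <= mu ->
  (* the iteration *)
  (forall k, u k 0%N = 0) ->
  (forall k j, (j < J)%N ->
     u k j.+1 = u k j
       - mp_pinv ((D k)^T *m Amaj psi H V0 V c delta mu (x k + D k *m u k j) *m D k)
         *m (D k)^T *m grad (Fdelta Phi psi H y V0 V c delta) (x k + D k *m u k j)) ->
  (forall k, x k.+1 = x k + D k *m u k J) ->
  (* eta = smallest eigenvalue of mu H^T H + 2 V0^T V0 *)
  eigenvalue (mu *: (H^T *m H) + 2%:R *: (V0^T *m V0)) eta ->
  (forall a, eigenvalue (mu *: (H^T *m H) + 2%:R *: (V0^T *m V0)) a -> eta <= a) ->
  forall k j, (j < J)%N ->
    eta * norm2 ((x k + D k *m u k j.+1) - (x k + D k *m u k j))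
    <= norm2 (grad (Fdelta Phi psi H y V0 V c delta) (x k + D k *m u k j)).
Proof.
move=> _ _ _ _ _ _ _ _ _ _ _ _ _ _ _ _ _ dpsi_bound dpsi_lim _ _ u_step _ _ eta_min k j jJ.
rewrite (u_step k j jJ).
set xkj := x k + D k *m u k j; set g := grad _ xkj.
set A := Amaj psi H V0 V c delta mu xkj.
set v := D k *m (mp_pinv ((D k)^T *m A *m D k) *m ((D k)^T *m g)).
have -> : x k + D k *m (u k j - mp_pinv ((D k)^T *m A *m D k) *m (D k)^T *m g) - xkj = - v.
  by rewrite /xkj /v mulmxBr !mulmxA opprD addrACA subrr add0r addrC addKr.
rewrite norm2E sqnormN -norm2E; apply: norm2_le_of_mxform1_ge.
rewrite -mxform_pinv_step ?trmx_Amaj //.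
apply: le_trans (min_eigenvalue_le_mxform (trmx_A0 H V0 mu) eta_min v) _.
apply: mxform_A0_le_Amaj => s t t0; apply: omega_ge0 (dpsi_lim s) => // t' t'0.
by have [wb _ /(_ t' t'0)/andP[]] := dpsi_bound s.
Qed.
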